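(* Let $H_n=\sum_{j=1}^n\frac1j$, let $\gamma$ be the Euler–Mascheroni constant, $\Gamma$ the gamma function, $z^{\overline{k}} = z(z+1) \cdots (z + k -1)$ the rising factorial, and $G$ the Barnes $G$-function. Then: (i) for $k \in \{1, 2,\ldots\}$, $$\sum_{n = 1}^\infty \left(H_n - \log\sqrt[k]{n^{\overline{k}}} - \gamma + \frac{k - 2}{2n} \right) = \frac{\gamma k + 1 -\log (2 \pi )}{2} + \frac{\log G(k+1)}{k};$$ (ii) for $x >0$, $$\sum_{n=1}^\infty \left(H_n - \log(n + x -1) - \gamma + \frac{x}{n} - \frac{3}{2n}\right) = \gamma x + \log\Gamma(x) + \frac{1 - \gamma -\log (2\pi)}{2}.$$
   Context: The Barnes $G$-function is the entire function $G(z+1) = (2\pi)^{z/2} e^{-\frac{z+z^2(1+\gamma)}{2}} \prod_{m=1}^\infty \left(1+\frac{z}{m}\right)^m e^{-z+\frac{z^2}{2m}}$; it satisfies $G(1)=1$ and $G(z+1)=\Gamma(z)G(z)$. *)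

From Stdlib Require Import Reals.
From Coquelicot Require Import Coquelicot.
Open Scope R_scope.

Fixpoint harmonic (n : nat) : R :=
  match n with
  | O => 0
  | S m => harmonic m + / INR (S m)
  end.

Fixpoint rising (z : R) (k : nat) : R :=
  match k with
  | O => 1
  | S m => rising z m * (z + INR m)
  end.

Definition euler_gamma : R :=
  real (Lim_seq (fun n => harmonic n - ln (INR n))).

(* Gamma function for x > 0, by Euler's limit formula
   Gamma(x) = lim_n n! n^x / (x (x+1) ... (x+n)). *)
Definition Gamma (x : R) : R :=
  real (Lim_seq (fun n => INR (Factorial.fact n) * Rpower (INR n) x / rising x (S n))).

Fixpoint barnes_prod (z : R) (N : nat) : R :=
  match N with
  | O => 1
  | S M => barnes_prod z M *
           ((1 + z / INR (S M)) ^ (S M) * exp (- z + z ^ 2 / (2 * INR (S M))))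
  end.

Definition BarnesG (w : R) : R :=
  let z := w - 1 in
  Rpower (2 * PI) (z / 2) * exp (- (z + z ^ 2 * (1 + euler_gamma)) / 2)
  * real (Lim_seq (barnes_prod z)).

From Stdlib Require Import Reals Lra Lia Psatz.
From Coquelicot Require Import Coquelicot.
Open Scope R_scope.

(* The N-th partial sum of (ii) is
     (N + x - 1/2) H_N - N (1 + gamma) - ln (x (x+1) ... (x+N-1))
   = (N + x - 1/2) (H_N - ln N - gamma) + (x - 1/2) gamma
     + ln (N! N^x / (x (x+1) ... (x+N))) - (ln N! - (N + 1/2) ln N + N) + o(1).
   The first term tends to 1/2 because H_N - ln N - gamma lies between 1/(2N+2) and 1/(2N),
   the third is Euler's limit for ln Gamma(x), and the Stirling sequence tends to ln(2 pi)/2 by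
   Wallis' integrals.  Identity (i) is the average of (ii) over x = 1, ..., k, because
   ln n^(k) = sum_{j<k} ln (n+j), ln Gamma(j+1) = ln j! and ln G(k+1) = sum_{j<k} ln j!; the
   last one comes from telescoping G(k+2)/G(k+1) on the partial products, which again reduces
   to the constants of Euler and Stirling. *)

Lemma nonneg_of_derive_nonneg (f f' : R -> R) (u : R) : 0 <= u -> f 0 = 0 ->
  (forall c, 0 <= c <= u -> is_derive f c (f' c)) ->
  (forall c, 0 < c < u -> 0 <= f' c) -> 0 <= f u.
Proof.
intros Hu Hf0 Hd Hpos.
destruct (Req_dec u 0) as [->|Hu0]; [lra|].
destruct (MVT_cor2 f f' 0 u ltac:(lra)) as [c [Hfc Hc]].
{ intros c Hc. apply is_derive_Reals, Hd; lra. }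
assert (0 <= f' c * (u - 0)) by (apply Rmult_le_pos; [apply Hpos|]; lra).
lra.
Qed.

Lemma ln_1p_le u : -1 < u -> ln (1 + u) <= u.
Proof.
intros Hu. rewrite <- (ln_exp u) at 2. apply ln_le; [lra | apply exp_ineq1_le].
Qed.

Lemma ln_1p_ge_quadratic u : 0 <= u -> u - u ^ 2 / 2 <= ln (1 + u).
Proof.
intros Hu. enough (0 <= ln (1 + u) - u + u ^ 2 / 2) by lra.
apply (nonneg_of_derive_nonneg (fun u => ln (1 + u) - u + u ^ 2 / 2)
                               (fun c => c ^ 2 / (1 + c))); [lra | | |].
- cbv beta. rewrite (Rplus_0_r 1), ln_1. field.
- intros c Hc. auto_derive; [lra | field; lra].
- intros c Hc. apply Rdiv_le_0_compat; nra.
Qed.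

Lemma ln_1p_le_cubic u : 0 <= u -> ln (1 + u) <= u - u ^ 2 / 2 + u ^ 3 / 3.
Proof.
intros Hu. enough (0 <= u - u ^ 2 / 2 + u ^ 3 / 3 - ln (1 + u)) by lra.
apply (nonneg_of_derive_nonneg (fun u => u - u ^ 2 / 2 + u ^ 3 / 3 - ln (1 + u))
                               (fun c => c ^ 3 / (1 + c))); [lra | | |].
- cbv beta. rewrite (Rplus_0_r 1), ln_1. field.
- intros c Hc. auto_derive; [lra | field; lra].
- intros c Hc. apply Rdiv_le_0_compat; nra.
Qed.

Lemma ln_1p_ge_pade u : 0 <= u -> 2 * u / (2 + u) <= ln (1 + u).
Proof.
intros Hu. enough (0 <= ln (1 + u) - 2 * u / (2 + u)) by lra.
apply (nonneg_of_derive_nonneg (fun u => ln (1 + u) - 2 * u / (2 + u))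
                               (fun c => c ^ 2 / ((1 + c) * (2 + c) ^ 2))); [lra | | |].
- cbv beta. rewrite (Rplus_0_r 1), ln_1. field.
- intros c Hc. auto_derive; [lra | field; lra].
- intros c Hc. apply Rdiv_le_0_compat; [nra | apply Rmult_lt_0_compat; nra].
Qed.

Lemma ln_plus_sub_ln a c : 0 < a -> 0 < a + c -> ln (a + c) - ln a = ln (1 + c / a).
Proof.
intros Ha Hac.
assert (Hq : 0 < 1 + c / a) by (replace (1 + c / a) with ((a + c) / a) by (field; lra);
                                 apply Rdiv_lt_0_compat; lra).
replace (a + c) with (a * (1 + c / a)) by (field; lra).
rewrite ln_mult by lra. ring.
Qed.

Lemma eventually_INR_plus_pos b : eventually (fun n => 0 < INR n + b).
Proof.
destruct (INR_unbounded (Rabs b)) as [N HN]. exists N. intros n Hn.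
apply le_INR in Hn. pose proof (Rle_abs (- b)). rewrite Rabs_Ropp in *. lra.
Qed.

Lemma is_lim_seq_inv_INR_plus b : is_lim_seq (fun n => / (INR n + b)) 0.
Proof.
change (Finite 0) with (Rbar_inv p_infty).
apply is_lim_seq_inv; [| discriminate].
apply (is_lim_seq_plus _ _ p_infty b);
  [apply is_lim_seq_INR | apply is_lim_seq_const | reflexivity].
Qed.

Lemma is_lim_seq_inv_INR : is_lim_seq (fun n => / INR n) 0.
Proof.
apply (is_lim_seq_ext (fun n => / (INR n + 0))); [intros; now rewrite Rplus_0_r|].
apply is_lim_seq_inv_INR_plus.
Qed.

Lemma is_lim_seq_INR_ratio a b : is_lim_seq (fun n => (INR n + a) / (INR n + b)) 1.
Proof.
apply is_lim_seq_ext_loc with (fun n => 1 + (a - b) * / (INR n + b)).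
- destruct (eventually_INR_plus_pos b) as [N HN]. exists N. intros n Hn.
  specialize (HN n Hn). field. lra.
- replace (Finite 1) with (Finite (1 + (a - b) * 0)) by (f_equal; ring).
  apply is_lim_seq_plus'; [apply is_lim_seq_const|].
  apply is_lim_seq_mult'; [apply is_lim_seq_const | apply is_lim_seq_inv_INR_plus].
Qed.

Lemma is_lim_seq_INR_ratio_0 b : is_lim_seq (fun n => INR n / (INR n + b)) 1.
Proof.
apply (is_lim_seq_ext (fun n => (INR n + 0) / (INR n + b))); [intros; now rewrite Rplus_0_r|].
apply is_lim_seq_INR_ratio.
Qed.

Lemma is_lim_seq_ln_plus_sub_ln c : 0 <= c -> is_lim_seq (fun n => ln (INR n + c) - ln (INR n)) 0.
Proof.
intros Hc.
apply is_lim_seq_le_le_loc with (fun _ => 0) (fun n => c * / INR n).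
- exists 1%nat. intros n Hn. assert (0 < INR n) by (apply lt_0_INR; lia).
  assert (0 <= c / INR n) by (apply Rdiv_le_0_compat; lra).
  rewrite ln_plus_sub_ln by lra. split.
  + rewrite <- ln_1. apply ln_le; lra.
  + apply ln_1p_le. lra.
- apply is_lim_seq_const.
- replace (Finite 0) with (Finite (c * 0)) by (f_equal; ring).
  apply is_lim_seq_mult'; [apply is_lim_seq_const | apply is_lim_seq_inv_INR].
Qed.

Lemma is_lim_seq_INR_mul_ln_succ_sub_ln c : 0 <= c ->
  is_lim_seq (fun n => INR n * (ln (INR n + c + 1) - ln (INR n + c))) 1.
Proof.
intros Hc.
set (r n := INR n / (INR n + c)).
apply is_lim_seq_le_le_loc with (fun n => r n - r n * / (INR n + c) / 2) r.
- exists 1%nat. intros n Hn. assert (0 < INR n) by (apply lt_0_INR; lia).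
  assert (Hu : 0 <= 1 / (INR n + c)) by (apply Rdiv_le_0_compat; lra).
  pose proof (ln_1p_le (1 / (INR n + c)) ltac:(lra)).
  pose proof (ln_1p_ge_quadratic _ Hu).
  rewrite ln_plus_sub_ln by lra. unfold r. split.
  + replace (INR n / (INR n + c) - INR n / (INR n + c) * / (INR n + c) / 2)
      with (INR n * (1 / (INR n + c) - (1 / (INR n + c)) ^ 2 / 2)) by (field; lra).
    apply Rmult_le_compat_l; lra.
  + replace (INR n / (INR n + c)) with (INR n * (1 / (INR n + c))) by (field; lra).
    apply Rmult_le_compat_l; lra.
- replace (Finite 1) with (Finite (1 - 1 * 0 / 2)) by (f_equal; field).
  apply is_lim_seq_minus'; [apply is_lim_seq_INR_ratio_0|].
  apply is_lim_seq_mult'; [| apply is_lim_seq_const].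
  apply is_lim_seq_mult'; [apply is_lim_seq_INR_ratio_0 | apply is_lim_seq_inv_INR_plus].
- apply is_lim_seq_INR_ratio_0.
Qed.

Lemma adjacent_seq_lim (a b : nat -> R) (n0 : nat) :
  (forall n, (n0 <= n)%nat -> a n <= a (S n)) ->
  (forall n, (n0 <= n)%nat -> b (S n) <= b n) ->
  is_lim_seq (fun n => b n - a n) 0 ->
  exists l : R, is_lim_seq a l /\ is_lim_seq b l /\
    forall n, (n0 <= n)%nat -> a n <= l <= b n.
Proof.
intros Ha Hb Hab.
set (a' k := a (k + n0)%nat). set (b' k := b (k + n0)%nat).
assert (Ha' : forall k, a' k <= a' (S k)) by (intros k; apply (Ha (k + n0)%nat); lia).
assert (Hb' : forall k, b' (S k) <= b' k) by (intros k; apply (Hb (k + n0)%nat); lia).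
assert (Hab' : is_lim_seq (fun k => b' k - a' k) 0)
  by exact (proj1 (is_lim_seq_incr_n (fun n => b n - a n) n0 0) Hab).
destruct (ex_lim_seq_adj a' b' Ha' Hb' Hab') as [[l Hl] [_ _]].
assert (Hlb : is_lim_seq b' l).
{ apply (is_lim_seq_ext (fun k => a' k + (b' k - a' k))); [intros; ring|].
  replace (Finite l) with (Finite (l + 0)) by (f_equal; ring).
  now apply is_lim_seq_plus'. }
exists l. split; [|split].
- now apply (is_lim_seq_incr_n a n0).
- now apply (is_lim_seq_incr_n b n0).
- intros n Hn. replace n with (n - n0 + n0)%nat by lia. split.
  + exact (is_lim_seq_incr_compare a' l Hl Ha' (n - n0)).
  + exact (is_lim_seq_decr_compare b' l Hlb Hb' (n - n0)).
Qed.

(* [a n - c/n] increases, [a n + c/n] decreases. *)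
Lemma ex_finite_lim_seq_of_step_bound (a : nat -> R) (c : R) (n0 : nat) : (1 <= n0)%nat ->
  (forall n, (n0 <= n)%nat -> Rabs (a (S n) - a n) <= c * (/ INR n - / INR (S n))) ->
  ex_finite_lim_seq a.
Proof.
intros Hn0 Hstep.
destruct (adjacent_seq_lim (fun n => a n - c * / INR n) (fun n => a n + c * / INR n) n0)
  as [l [Hlow [Hup _]]].
- intros n Hn. pose proof (proj1 (Rabs_le_between _ _) (Hstep n Hn)). lra.
- intros n Hn. pose proof (proj1 (Rabs_le_between _ _) (Hstep n Hn)). lra.
- apply (is_lim_seq_ext (fun n => 2 * c * / INR n)); [intros; ring|].
  replace (Finite 0) with (Finite (2 * c * 0)) by (f_equal; ring).
  apply is_lim_seq_mult'; [apply is_lim_seq_const | apply is_lim_seq_inv_INR].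
- exists l. apply (is_lim_seq_ext (fun n => ((a n - c * / INR n) + (a n + c * / INR n)) / 2));
    [intros; lra|].
  replace (Finite l) with (Finite ((l + l) / 2)) by (f_equal; field).
  apply is_lim_seq_div'; [apply is_lim_seq_plus'; assumption | apply is_lim_seq_const | lra].
Qed.

(** * Euler's constant *)

Definition euler_seq (n : nat) : R := harmonic n - ln (INR n).

Lemma euler_seq_sub_succ n : (1 <= n)%nat ->
  euler_seq n - euler_seq (S n) = ln (1 + 1 / INR n) - / INR (S n).
Proof.
intros Hn. assert (0 < INR n) by (apply lt_0_INR; lia).
unfold euler_seq. cbn [harmonic]. rewrite <- ln_plus_sub_ln, <- S_INR by lra. ring.
Qed.

Lemma euler_seq_bracket : exists l : R, is_lim_seq euler_seq l /\
  forall n, (2 <= n)%nat -> euler_seq n - / (2 * INR n) <= l <= euler_seq n - / (2 * INR (S n)).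
Proof.
destruct (adjacent_seq_lim (fun n => euler_seq n - / (2 * INR n))
                           (fun n => euler_seq n - / (2 * INR (S n))) 2) as [l [Hl [_ Hbr]]].
- intros n Hn. assert (Hx : 2 <= INR n) by (apply (le_INR 2); lia).
  pose proof (euler_seq_sub_succ n ltac:(lia)).
  pose proof (ln_1p_le_cubic (1 / INR n) ltac:(apply Rdiv_le_0_compat; lra)).
  rewrite S_INR in *. set (x := INR n) in *.
  assert (/ (2 * x) - / (2 * (x + 1)) - (1 / x - (1 / x) ^ 2 / 2 + (1 / x) ^ 3 / 3 - / (x + 1))
          = (x - 2) / (6 * x ^ 3 * (x + 1))) by (field; lra).
  assert (0 <= (x - 2) / (6 * x ^ 3 * (x + 1))) by (apply Rdiv_le_0_compat; nra).
  lra.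
- intros n Hn. assert (Hx : 2 <= INR n) by (apply (le_INR 2); lia).
  pose proof (euler_seq_sub_succ n ltac:(lia)).
  pose proof (ln_1p_ge_quadratic (1 / INR n) ltac:(apply Rdiv_le_0_compat; lra)).
  rewrite !S_INR in *. set (x := INR n) in *.
  assert (1 / x - (1 / x) ^ 2 / 2 - / (x + 1) - (/ (2 * (x + 1)) - / (2 * (x + 1 + 1)))
          = (x - 2) / (2 * x ^ 2 * (x + 1) * (x + 2))) by (field; lra).
  assert (0 <= (x - 2) / (2 * x ^ 2 * (x + 1) * (x + 2))) by (apply Rdiv_le_0_compat; nra).
  lra.
- apply (is_lim_seq_ext (fun n => / 2 * (/ (INR n + 0) - / (INR n + 1)))).
  { intros n. rewrite S_INR, Rplus_0_r, !Rinv_mult. ring. }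
  replace (Finite 0) with (Finite (/ 2 * (0 - 0))) by (f_equal; ring).
  apply is_lim_seq_mult'; [apply is_lim_seq_const|].
  apply is_lim_seq_minus'; apply is_lim_seq_inv_INR_plus.
- exists l. split; [|exact Hbr].
  apply (is_lim_seq_ext_loc (fun n => (euler_seq n - / (2 * INR n)) + / 2 * / INR n)).
  { exists 1%nat. intros n Hn. assert (0 < INR n) by (apply lt_0_INR; lia). field. lra. }
  replace (Finite l) with (Finite (l + / 2 * 0)) by (f_equal; ring).
  apply is_lim_seq_plus'; [exact Hl|].
  apply is_lim_seq_mult'; [apply is_lim_seq_const | apply is_lim_seq_inv_INR].
Qed.

Lemma euler_gamma_eq_lim l : is_lim_seq euler_seq l -> euler_gamma = l.
Proof.
intros Hl. unfold euler_gamma. fold euler_seq. now rewrite (is_lim_seq_unique _ _ Hl).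
Qed.

Lemma euler_seq_lim : is_lim_seq euler_seq euler_gamma.
Proof.
destruct euler_seq_bracket as [l [Hl _]]. now rewrite (euler_gamma_eq_lim l Hl).
Qed.

Lemma euler_gamma_bounds n : (2 <= n)%nat ->
  euler_seq n - / (2 * INR n) <= euler_gamma <= euler_seq n - / (2 * INR (S n)).
Proof.
destruct euler_seq_bracket as [l [Hl Hbr]]. rewrite (euler_gamma_eq_lim l Hl). exact (Hbr n).
Qed.

Lemma euler_seq_sub_gamma_rate a :
  is_lim_seq (fun n => (INR n + a) * (euler_seq n - euler_gamma)) (/ 2).
Proof.
apply is_lim_seq_le_le_loc with (fun n => (INR n + a) / (INR n + 1) * / 2)
                                (fun n => (INR n + a) / (INR n + 0) * / 2).
- destruct (eventually_INR_plus_pos a) as [N HN]. exists (N + 2)%nat. intros n Hn.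
  specialize (HN n ltac:(lia)). pose proof (euler_gamma_bounds n ltac:(lia)) as Hb.
  assert (0 < INR n) by (apply lt_0_INR; lia). rewrite S_INR in Hb. split.
  + replace ((INR n + a) / (INR n + 1) * / 2) with ((INR n + a) * / (2 * (INR n + 1)))
      by (field; lra).
    apply Rmult_le_compat_l; lra.
  + replace ((INR n + a) / (INR n + 0) * / 2) with ((INR n + a) * / (2 * INR n)) by (field; lra).
    apply Rmult_le_compat_l; lra.
- replace (Finite (/ 2)) with (Finite (1 * / 2)) by (f_equal; ring).
  apply is_lim_seq_mult'; [apply is_lim_seq_INR_ratio | apply is_lim_seq_const].
- replace (Finite (/ 2)) with (Finite (1 * / 2)) by (f_equal; ring).
  apply is_lim_seq_mult'; [apply is_lim_seq_INR_ratio | apply is_lim_seq_const].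
Qed.

(** * Stirling's constant *)

Fixpoint ln_fact (n : nat) : R :=
  match n with
  | O => 0
  | S m => ln_fact m + ln (INR (S m))
  end.

Definition stirling_seq (n : nat) : R := ln_fact n - (INR n + / 2) * ln (INR n) + INR n.

Lemma stirling_seq_step_bound n : (1 <= n)%nat ->
  Rabs (stirling_seq (S n) - stirling_seq n) <= / 2 * (/ INR n - / INR (S n)).
Proof.
intros Hn. assert (Hx : 1 <= INR n) by (apply (le_INR 1); lia).
assert (Hstep : stirling_seq n - stirling_seq (S n) = (INR n + / 2) * ln (1 + 1 / INR n) - 1).
{ unfold stirling_seq. cbn [ln_fact]. rewrite <- ln_plus_sub_ln, <- S_INR by lra.
  rewrite S_INR. ring. }
assert (Hu : 0 <= 1 / INR n) by (apply Rdiv_le_0_compat; lra).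
pose proof (ln_1p_le_cubic _ Hu). pose proof (ln_1p_ge_pade _ Hu).
rewrite S_INR. set (x := INR n) in *. set (L := ln (1 + 1 / x)) in *.
assert (Hlow : 1 <= (x + / 2) * L).
{ replace 1 with ((x + / 2) * (2 * (1 / x) / (2 + 1 / x))) by (field; lra).
  apply Rmult_le_compat_l; lra. }
assert (Hup : (x + / 2) * L <= (x + / 2) * (1 / x - (1 / x) ^ 2 / 2 + (1 / x) ^ 3 / 3))
  by (apply Rmult_le_compat_l; lra).
assert (/ 2 * (/ x - / (x + 1)) - ((x + / 2) * (1 / x - (1 / x) ^ 2 / 2 + (1 / x) ^ 3 / 3) - 1)
        = (5 * x + 2) * (x - 1) / (12 * x ^ 3 * (x + 1))) by (field; lra).
assert (0 <= (5 * x + 2) * (x - 1) / (12 * x ^ 3 * (x + 1))) by (apply Rdiv_le_0_compat; nra).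
rewrite Rabs_left1 by lra. lra.
Qed.

Definition wallis (n : nat) : R := RInt (fun t => sin t ^ n) 0 (PI / 2).

Lemma ex_RInt_sin_pow n a b : ex_RInt (fun t => sin t ^ n) a b.
Proof.
apply (@ex_RInt_continuous R_CompleteNormedModule). intros t _.
apply (@ex_derive_continuous R_AbsRing R_NormedModule). auto_derive. auto.
Qed.

(* Integration by parts, with [(sin^(n+1) cos)' = (n+1) sin^n - (n+2) sin^(n+2)]. *)
Lemma wallis_rec n : INR (S (S n)) * wallis (S (S n)) = INR (S n) * wallis n.
Proof.
set (df t := INR (S n) * sin t ^ n - INR (S (S n)) * sin t ^ (S (S n))).
set (F t := sin t ^ (S n) * cos t).
assert (Hparts : is_RInt df 0 (PI / 2) (minus (F (PI / 2)) (F 0))).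
{ apply (@is_RInt_derive R_CompleteNormedModule F df).
  - intros t _. unfold df, F. auto_derive; [auto|].
    change (match n with 0%nat => 1 | S _ => INR n + 1 end) with (INR (S n)).
    rewrite !S_INR. pose proof (sin2_cos2 t) as Hsc. unfold Rsqr in Hsc.
    transitivity ((INR n + 1) * sin t ^ n * (cos t * cos t) - sin t ^ S (S n)); [simpl; ring|].
    replace (cos t * cos t) with (1 - sin t * sin t) by lra. simpl; ring.
  - intros t _. unfold df. apply (@ex_derive_continuous R_AbsRing R_NormedModule).
    auto_derive. auto. }
assert (Hbd : minus (F (PI / 2)) (F 0) = 0).
{ unfold F. rewrite cos_PI2, sin_0. simpl. unfold minus, plus, opp; simpl. ring. }
assert (Hlin : is_RInt df 0 (PI / 2) (INR (S n) * wallis n - INR (S (S n)) * wallis (S (S n)))).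
{ apply (is_RInt_ext (fun t => minus (scal (INR (S n)) (sin t ^ n))
                                      (scal (INR (S (S n))) (sin t ^ (S (S n)))))); [reflexivity|].
  apply (@is_RInt_minus R_NormedModule); apply (@is_RInt_scal R_NormedModule);
    apply (@RInt_correct R_CompleteNormedModule); apply ex_RInt_sin_pow. }
rewrite Hbd in Hparts.
apply (@is_RInt_unique R_CompleteNormedModule) in Hparts.
apply (@is_RInt_unique R_CompleteNormedModule) in Hlin.
rewrite Hparts in Hlin. lra.
Qed.

Lemma wallis_0 : wallis 0 = PI / 2.
Proof.
unfold wallis. simpl. rewrite (@RInt_const R_CompleteNormedModule).
unfold scal; simpl. unfold mult; simpl. ring.
Qed.

Lemma wallis_1 : wallis 1 = 1.
Proof.
unfold wallis. apply (@is_RInt_unique R_CompleteNormedModule).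
replace 1 with (minus ((fun t => - cos t) (PI / 2)) ((fun t => - cos t) 0))
  by (rewrite cos_PI2, cos_0; unfold minus, plus, opp; simpl; ring).
apply (@is_RInt_derive R_CompleteNormedModule (fun t => - cos t) (fun t => sin t ^ 1)).
- intros t _. auto_derive; [auto | ring].
- intros t _. apply (@ex_derive_continuous R_AbsRing R_NormedModule). auto_derive. auto.
Qed.

Lemma sin_bounds_0_PI2 t : 0 <= t <= PI / 2 -> 0 <= sin t <= 1.
Proof.
intros Ht. pose proof PI_RGT_0. pose proof (SIN_bound t).
split; [apply sin_ge_0|]; lra.
Qed.

Lemma wallis_ge0 n : 0 <= wallis n.
Proof.
pose proof PI_RGT_0.
apply RInt_ge_0; [lra | apply ex_RInt_sin_pow|].
intros t Ht. apply pow_le, sin_bounds_0_PI2. lra.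
Qed.

Lemma wallis_succ_le n : wallis (S n) <= wallis n.
Proof.
pose proof PI_RGT_0.
apply RInt_le; [lra | apply ex_RInt_sin_pow | apply ex_RInt_sin_pow|].
intros t Ht. destruct (sin_bounds_0_PI2 t ltac:(lra)). simpl.
assert (0 <= sin t ^ n) by (apply pow_le; lra). nra.
Qed.

Lemma wallis_mul_succ n : INR (S n) * wallis (S n) * wallis n = PI / 2.
Proof.
induction n as [|n IHn].
- rewrite wallis_1, wallis_0. simpl. ring.
- rewrite wallis_rec, <- IHn. ring.
Qed.

Lemma wallis_gt0 n : 0 < wallis n.
Proof.
pose proof (wallis_mul_succ n). pose proof PI_RGT_0.
destruct (wallis_ge0 n) as [|Hz]; [assumption|].
rewrite <- Hz, Rmult_0_r in *. lra.
Qed.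

Lemma ln_wallis_odd m :
  ln (wallis (2 * m + 1)) = INR (2 * m) * ln 2 + 2 * ln_fact m - ln_fact (2 * m + 1).
Proof.
induction m as [|m IHm].
- simpl. rewrite wallis_1, ln_1. ring.
- replace (2 * S m + 1)%nat with (S (S (2 * m + 1))) by lia.
  set (k := (2 * m + 1)%nat) in *.
  assert (Hk : 0 < INR (S k)) by (apply lt_0_INR; lia).
  assert (Hk2 : 0 < INR (S (S k))) by (apply lt_0_INR; lia).
  assert (Hw : wallis (S (S k)) = INR (S k) * / INR (S (S k)) * wallis k).
  { apply Rmult_eq_reg_l with (INR (S (S k))); [|lra]. rewrite wallis_rec. field. lra. }
  pose proof (wallis_gt0 k).
  rewrite Hw, !ln_mult, ln_Rinv, IHm by auto using Rmult_lt_0_compat, Rinv_0_lt_compat.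
  cbn [ln_fact].
  replace (INR (S k)) with (2 * INR (S m))
    by (unfold k; rewrite !S_INR, plus_INR, mult_INR; simpl; ring).
  replace (INR (2 * S m)) with (INR (2 * m) + 2) by (rewrite !mult_INR, (S_INR m); simpl; ring).
  rewrite ln_mult by (try lra; apply lt_0_INR; lia). ring.
Qed.

(* Squeeze from [W(2m+2) <= W(2m+1) <= W(2m)] and [(n+1) W(n+1) W(n) = PI/2]. *)
Lemma wallis_odd_lim : is_lim_seq (fun m => INR (2 * m + 1) * wallis (2 * m + 1) ^ 2) (PI / 2).
Proof.
pose proof PI_RGT_0.
apply is_lim_seq_le_le with (fun m => (INR m + / 2) / (INR m + 1) * (PI / 2)) (fun _ => PI / 2).
- intros m.
  pose proof (wallis_mul_succ (2 * m)) as H0. pose proof (wallis_mul_succ (S (2 * m))) as H1.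
  pose proof (wallis_succ_le (2 * m)) as D0. pose proof (wallis_succ_le (S (2 * m))) as D1.
  pose proof (wallis_gt0 (S (2 * m))). pose proof (wallis_gt0 (S (S (2 * m)))).
  replace (2 * m + 1)%nat with (S (2 * m)) by lia.
  replace (INR (S (S (2 * m)))) with (2 * INR m + 2) in *
    by (rewrite !S_INR, mult_INR; simpl; ring).
  replace (INR (S (2 * m))) with (2 * INR m + 1) in *
    by (rewrite !S_INR, mult_INR; simpl; ring).
  pose proof (pos_INR m).
  set (a := wallis (S (2 * m))) in *. set (b := wallis (S (S (2 * m)))) in *.
  set (c := wallis (2 * m)) in *.
  split.
  + replace ((INR m + / 2) / (INR m + 1) * (PI / 2)) with ((2 * INR m + 1) * b * a)
      by (rewrite <- H1; field; lra).
    simpl. nra.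
  + rewrite <- H0. simpl. nra.
- replace (Finite (PI / 2)) with (Finite (1 * (PI / 2))) by (f_equal; ring).
  apply is_lim_seq_mult'; [apply is_lim_seq_INR_ratio | apply is_lim_seq_const].
- apply is_lim_seq_const.
Qed.

Lemma ln_wallis_odd_stirling m : (1 <= m)%nat ->
  ln (INR (2 * m + 1) * wallis (2 * m + 1) ^ 2)
  = 4 * stirling_seq m - 2 * stirling_seq (2 * m) - 2 * ln 2
    - (ln (INR (2 * m) + 1) - ln (INR (2 * m))).
Proof.
intros Hm. assert (0 < INR m) by (apply lt_0_INR; lia).
pose proof (wallis_gt0 (2 * m + 1)).
rewrite ln_mult, ln_pow, ln_wallis_odd by (try apply pow_lt; auto; apply lt_0_INR; lia).
replace (2 * m + 1)%nat with (S (2 * m)) by lia.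
unfold stirling_seq. cbn [ln_fact].
rewrite (S_INR (2 * m)), !mult_INR, (ln_mult (INR 2) (INR m)) by (simpl; lra).
replace (INR 2) with 2 by (simpl; ring). field.
Qed.

Lemma stirling_seq_lim : is_lim_seq stirling_seq (ln (2 * PI) / 2).
Proof.
pose proof PI_RGT_0.
destruct (ex_finite_lim_seq_of_step_bound stirling_seq (/ 2) 1 (le_n 1) stirling_seq_step_bound)
  as [C HC].
assert (Hdouble : filterlim (fun m => (2 * m)%nat) eventually eventually)
  by (apply eventually_subseq; intros; lia).
assert (Hlim1 : is_lim_seq (fun m => ln (INR (2 * m + 1) * wallis (2 * m + 1) ^ 2)) (ln (PI / 2))).
{ apply is_lim_seq_continuous; [|exact wallis_odd_lim].
  apply derivable_continuous_pt. exists (/ (PI / 2)). apply derivable_pt_lim_ln. lra. }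
assert (Hlim2 : is_lim_seq (fun m => ln (INR (2 * m + 1) * wallis (2 * m + 1) ^ 2))
                           (4 * C - 2 * C - 2 * ln 2 - 0)).
{ apply (is_lim_seq_ext_loc (fun m => 4 * stirling_seq m - 2 * stirling_seq (2 * m) - 2 * ln 2
                                      - (ln (INR (2 * m) + 1) - ln (INR (2 * m))))).
  { exists 1%nat. intros m Hm. symmetry. now apply ln_wallis_odd_stirling. }
  repeat apply is_lim_seq_minus'.
  - apply is_lim_seq_mult'; [apply is_lim_seq_const | exact HC].
  - apply is_lim_seq_mult'; [apply is_lim_seq_const|].
    exact (is_lim_seq_subseq stirling_seq C _ Hdouble HC).
  - apply is_lim_seq_const.
  - apply (is_lim_seq_subseq (fun n => ln (INR n + 1) - ln (INR n)) 0 _ Hdouble).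
    apply is_lim_seq_ln_plus_sub_ln. lra. }
pose proof (is_lim_seq_unique _ _ Hlim1) as E1. rewrite (is_lim_seq_unique _ _ Hlim2) in E1.
injection E1 as E1.
rewrite ln_div, ln_mult in * by lra.
replace (ln 2 + ln PI) with (2 * C) by lra.
replace (2 * C / 2) with C by field. exact HC.
Qed.

(** * Euler's limit for the Gamma function *)

Fixpoint sum_lt (f : nat -> R) (k : nat) : R :=
  match k with
  | O => 0
  | S j => sum_lt f j + f j
  end.

Lemma INR_fact_eq_exp n : INR (Factorial.fact n) = exp (ln_fact n).
Proof.
induction n as [|n IHn]; [simpl; now rewrite exp_0|].
change (Factorial.fact (S n)) with (S n * Factorial.fact n)%nat.
cbn [ln_fact]. rewrite mult_INR, IHn, exp_plus, exp_ln by (apply lt_0_INR; lia). ring.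
Qed.

Lemma rising_eq_exp x n : 0 < x -> rising x n = exp (sum_lt (fun j => ln (x + INR j)) n).
Proof.
intros Hx. induction n as [|n IHn]; [simpl; now rewrite exp_0|].
cbn [rising sum_lt]. pose proof (pos_INR n).
rewrite IHn, exp_plus, exp_ln by lra. reflexivity.
Qed.

Lemma ln_rising x n : 0 < x -> ln (rising x n) = sum_lt (fun j => ln (x + INR j)) n.
Proof. intros Hx. now rewrite rising_eq_exp, ln_exp. Qed.

Definition ln_gamma_approx (x : R) (N : nat) : R :=
  ln_fact N + x * ln (INR N) - sum_lt (fun j => ln (x + INR j)) (S N).

Lemma gamma_approx_eq_exp x N : 0 < x ->
  INR (Factorial.fact N) * Rpower (INR N) x / rising x (S N) = exp (ln_gamma_approx x N).
Proof.
intros Hx. rewrite INR_fact_eq_exp, rising_eq_exp by exact Hx.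
unfold Rpower, ln_gamma_approx, Rdiv, Rminus. rewrite !exp_plus, exp_Ropp. ring.
Qed.

Lemma ln_gamma_approx_step_bound x N : 0 < x -> (1 <= N)%nat ->
  Rabs (ln_gamma_approx x (S N) - ln_gamma_approx x N) <= (x + x ^ 2) * (/ INR N - / INR (S N)).
Proof.
intros Hx HN. assert (Hy : 1 <= INR N) by (apply (le_INR 1); lia).
assert (Hstep : ln_gamma_approx x (S N) - ln_gamma_approx x N
                = x * ln (1 + 1 / INR N) - ln (1 + x / (INR N + 1))).
{ unfold ln_gamma_approx. cbn [ln_fact sum_lt].
  rewrite <- !ln_plus_sub_ln by lra. rewrite !S_INR.
  replace (x + (INR N + 1)) with (INR N + 1 + x) by ring. ring. }
rewrite Hstep, S_INR.
assert (Hu : 0 <= 1 / INR N) by (apply Rdiv_le_0_compat; lra).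
assert (Hv : 0 <= x / (INR N + 1)) by (apply Rdiv_le_0_compat; lra).
pose proof (ln_1p_le (1 / INR N) ltac:(lra)).
pose proof (ln_1p_ge_quadratic _ Hu).
pose proof (ln_1p_le (x / (INR N + 1)) ltac:(lra)).
pose proof (ln_1p_ge_quadratic _ Hv).
set (y := INR N) in *.
set (a := ln (1 + 1 / y)) in *. set (b := ln (1 + x / (y + 1))) in *.
assert (x * a <= x * (1 / y)) by (apply Rmult_le_compat_l; lra).
assert (x * (1 / y - (1 / y) ^ 2 / 2) <= x * a) by (apply Rmult_le_compat_l; lra).
assert ((x + x ^ 2) * (/ y - / (y + 1)) - (x * (1 / y) - (x / (y + 1) - (x / (y + 1)) ^ 2 / 2))
        = x ^ 2 * (y + 2) / (2 * y * (y + 1) ^ 2)) by (field; lra).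
assert (0 <= x ^ 2 * (y + 2) / (2 * y * (y + 1) ^ 2)) by (apply Rdiv_le_0_compat; nra).
assert (x * (1 / y - (1 / y) ^ 2 / 2) - x / (y + 1) + (x + x ^ 2) * (/ y - / (y + 1))
        = x * (3 * y - 1) / (2 * y ^ 2 * (y + 1)) + x ^ 2 / (y * (y + 1))) by (field; lra).
assert (0 <= x * (3 * y - 1) / (2 * y ^ 2 * (y + 1)) + x ^ 2 / (y * (y + 1)))
  by (apply Rplus_le_le_0_compat; apply Rdiv_le_0_compat; nra).
apply Rabs_le_between. lra.
Qed.

Lemma ln_gamma_approx_lim x : 0 < x -> is_lim_seq (ln_gamma_approx x) (ln (Gamma x)).
Proof.
intros Hx.
destruct (ex_finite_lim_seq_of_step_bound (ln_gamma_approx x) (x + x ^ 2) 1 (le_n 1))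
  as [l Hl]; [intros; now apply ln_gamma_approx_step_bound|].
enough (HG : Gamma x = exp l) by (now rewrite HG, ln_exp).
unfold Gamma.
rewrite (Lim_seq_ext _ (fun n => exp (ln_gamma_approx x n)))
  by (intros; now apply gamma_approx_eq_exp).
rewrite (is_lim_seq_unique _ (exp l)); [reflexivity|].
apply is_lim_seq_continuous; [|exact Hl].
apply derivable_continuous_pt, derivable_pt_exp.
Qed.

Lemma is_lim_seq_ln_fact_shift j :
  is_lim_seq (fun N => ln_fact N + INR (S j) * ln (INR N) - ln_fact (S N + j)) 0.
Proof.
induction j as [|j IHj].
- apply (is_lim_seq_ext (fun N => - (ln (INR N + 1) - ln (INR N)))).
  { intros N. rewrite Nat.add_0_r. cbn [ln_fact]. rewrite (S_INR N), (S_INR 0). simpl INR. ring. }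
  replace (Finite 0) with (Rbar_opp 0) by (simpl; f_equal; ring).
  apply -> is_lim_seq_opp. apply is_lim_seq_ln_plus_sub_ln. lra.
- apply (is_lim_seq_ext (fun N => (ln_fact N + INR (S j) * ln (INR N) - ln_fact (S N + j))
                                  - (ln (INR N + INR (S (S j))) - ln (INR N)))).
  { intros N. replace (S N + S j)%nat with (S (S N + j)) by lia. cbn [ln_fact].
    replace (INR (S (S N + j))) with (INR N + INR (S (S j)))
      by (rewrite !S_INR, plus_INR, !S_INR; ring).
    rewrite (S_INR (S j)). ring. }
  replace (Finite 0) with (Finite (0 - 0)) by (f_equal; ring).
  apply is_lim_seq_minus'; [exact IHj|].
  apply is_lim_seq_ln_plus_sub_ln, pos_INR.
Qed.

Lemma sum_lt_ln_shift j N :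
  sum_lt (fun i => ln (INR j + 1 + INR i)) N = ln_fact (N + j) - ln_fact j.
Proof.
induction N as [|N IHN]; [simpl; ring|].
cbn [sum_lt ln_fact Nat.add]. rewrite IHN, S_INR, plus_INR. ring_simplify.
replace (INR j + 1 + INR N) with (INR N + INR j + 1) by ring. ring.
Qed.

Lemma ln_Gamma_nat j : ln (Gamma (INR j + 1)) = ln_fact j.
Proof.
assert (Hlim : is_lim_seq (ln_gamma_approx (INR j + 1)) (ln_fact j)).
{ apply (is_lim_seq_ext (fun N => (ln_fact N + INR (S j) * ln (INR N) - ln_fact (S N + j))
                                  + ln_fact j)).
  { intros N. unfold ln_gamma_approx. rewrite sum_lt_ln_shift, S_INR. ring. }
  replace (Finite (ln_fact j)) with (Finite (0 + ln_fact j)) by (f_equal; ring).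
  apply is_lim_seq_plus'; [apply is_lim_seq_ln_fact_shift | apply is_lim_seq_const]. }
pose proof (ln_gamma_approx_lim (INR j + 1) ltac:(pose proof (pos_INR j); lra)) as HG.
pose proof (is_lim_seq_unique _ _ HG) as E. rewrite (is_lim_seq_unique _ _ Hlim) in E.
now injection E.
Qed.

(** * The Barnes G-function at integers *)

Fixpoint ln_barnes_prod (z : R) (N : nat) : R :=
  match N with
  | O => 0
  | S M => ln_barnes_prod z M
           + (INR (S M) * ln (1 + z / INR (S M)) - z + z ^ 2 / (2 * INR (S M)))
  end.

Lemma barnes_prod_eq_exp z N : 0 <= z -> barnes_prod z N = exp (ln_barnes_prod z N).
Proof.
intros Hz. induction N as [|N IHN]; [simpl; now rewrite exp_0|].
cbn [barnes_prod ln_barnes_prod].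
assert (0 <= z / INR (S N)) by (apply Rdiv_le_0_compat; [lra | apply lt_0_INR; lia]).
rewrite <- (Rpower_pow (S N) (1 + z / INR (S N))) by lra.
unfold Rpower. rewrite IHN, <- !exp_plus. f_equal. ring.
Qed.

Lemma ln_barnes_prod_succ_sub k N :
  ln_barnes_prod (INR (S k)) N - ln_barnes_prod (INR k) N
  = INR N * ln (INR N + INR k + 1) - (ln_fact (N + k) - ln_fact k) - INR N
    + (INR k + / 2) * harmonic N.
Proof.
pose proof (pos_INR k).
induction N as [|N IHN]; [simpl; ring|].
cbn [ln_barnes_prod harmonic]. replace (S N + k)%nat with (S (N + k)) by lia. cbn [ln_fact].
pose proof (pos_INR N). assert (0 < INR (S N)) by (apply lt_0_INR; lia).
rewrite <- !ln_plus_sub_ln by (rewrite ?S_INR; lra).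
rewrite (S_INR (N + k)), plus_INR, !S_INR.
replace (INR N + 1 + (INR k + 1)) with (INR N + INR k + 1 + 1) by ring.
replace (INR N + 1 + INR k) with (INR N + INR k + 1) by ring.
transitivity (ln_barnes_prod (INR (S k)) N - ln_barnes_prod (INR k) N
  + ((INR N + 1) * (ln (INR N + INR k + 1 + 1) - ln (INR N + INR k + 1)) - 1
     + (2 * INR k + 1) / (2 * (INR N + 1)))).
- rewrite S_INR. field. lra.
- rewrite IHN. field. lra.
Qed.

Lemma ln_barnes_prod_succ_sub_lim k :
  is_lim_seq (fun N => ln_barnes_prod (INR (S k)) N - ln_barnes_prod (INR k) N)
             (1 - ln (2 * PI) / 2 + INR k + ln_fact k + (INR k + / 2) * euler_gamma).
Proof.
pose proof (pos_INR k).
apply (is_lim_seq_ext (fun N => INR N * (ln (INR N + INR k + 1) - ln (INR N + INR k))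
   - stirling_seq (N + k) + INR k + ln_fact k
   + (INR k + / 2) * (euler_seq N - (ln (INR N + INR k) - ln (INR N))))).
{ intros N. rewrite ln_barnes_prod_succ_sub. unfold stirling_seq, euler_seq.
  rewrite plus_INR. ring. }
apply is_lim_seq_plus'; [apply is_lim_seq_plus'; [apply is_lim_seq_plus'|]|].
- apply is_lim_seq_minus'; [now apply is_lim_seq_INR_mul_ln_succ_sub_ln|].
  now apply (is_lim_seq_incr_n stirling_seq k), stirling_seq_lim.
- apply is_lim_seq_const.
- apply is_lim_seq_const.
- apply is_lim_seq_mult'; [apply is_lim_seq_const|].
  rewrite <- (Rminus_0_r euler_gamma). apply is_lim_seq_minus'; [apply euler_seq_lim|].
  now apply is_lim_seq_ln_plus_sub_ln.
Qed.

Lemma ln_barnes_prod_nat_lim k :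
  is_lim_seq (ln_barnes_prod (INR k))
    (sum_lt ln_fact k - INR k / 2 * ln (2 * PI) + (INR k + INR k ^ 2 * (1 + euler_gamma)) / 2).
Proof.
induction k as [|k IHk].
- apply (is_lim_seq_ext (fun _ => 0)).
  { intros N. simpl INR. induction N as [|N IHN]; [reflexivity|].
    cbn [ln_barnes_prod]. rewrite <- IHN. unfold Rdiv. rewrite Rmult_0_l, Rplus_0_r, ln_1. ring. }
  replace (Finite (sum_lt ln_fact 0 - INR 0 / 2 * ln (2 * PI)
                   + (INR 0 + INR 0 ^ 2 * (1 + euler_gamma)) / 2))
    with (Finite 0) by (f_equal; simpl; field).
  apply is_lim_seq_const.
- apply (is_lim_seq_ext (fun N => ln_barnes_prod (INR k) N
                                  + (ln_barnes_prod (INR (S k)) N - ln_barnes_prod (INR k) N)));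
    [intros; ring|].
  replace (sum_lt ln_fact (S k) - INR (S k) / 2 * ln (2 * PI)
           + (INR (S k) + INR (S k) ^ 2 * (1 + euler_gamma)) / 2)
    with ((sum_lt ln_fact k - INR k / 2 * ln (2 * PI) + (INR k + INR k ^ 2 * (1 + euler_gamma)) / 2)
          + (1 - ln (2 * PI) / 2 + INR k + ln_fact k + (INR k + / 2) * euler_gamma))
    by (cbn [sum_lt]; rewrite S_INR; field).
  apply is_lim_seq_plus'; [exact IHk | apply ln_barnes_prod_succ_sub_lim].
Qed.

Lemma ln_BarnesG_nat k : ln (BarnesG (INR k + 1)) = sum_lt ln_fact k.
Proof.
unfold BarnesG. replace (INR k + 1 - 1) with (INR k) by ring.
rewrite (Lim_seq_ext _ (fun N => exp (ln_barnes_prod (INR k) N)))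
  by (intros; apply barnes_prod_eq_exp, pos_INR).
erewrite is_lim_seq_unique.
2:{ apply is_lim_seq_continuous; [|apply ln_barnes_prod_nat_lim].
    apply derivable_continuous_pt, derivable_pt_exp. }
simpl real. unfold Rpower. rewrite <- !exp_plus, ln_exp. field.
Qed.

Definition gamma_series_term (x : R) (n : nat) : R :=
  let m := S n in
  harmonic m - ln (INR m + x - 1) - euler_gamma + x / INR m - 3 / (2 * INR m).

Definition gamma_series_sum (x : R) : R :=
  euler_gamma * x + ln (Gamma x) + (1 - euler_gamma - ln (2 * PI)) / 2.

Lemma sum_f_R0_gamma_series_term x N :
  sum_f_R0 (gamma_series_term x) N
  = (INR (S N) + x - / 2) * harmonic (S N) - INR (S N) - INR (S N) * euler_gamma
    - sum_lt (fun j => ln (x + INR j)) (S N).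
Proof.
induction N as [|N IHN].
- unfold gamma_series_term. simpl.
  replace (1 + x - 1) with x by ring. rewrite Rplus_0_r. field.
- cbn [sum_f_R0]. rewrite IHN. unfold gamma_series_term.
  cbn [harmonic sum_lt]. rewrite (S_INR (S N)).
  replace (INR (S N) + 1 + x - 1) with (x + INR (S N)) by ring.
  assert (0 < INR (S N)) by (apply lt_0_INR; lia). field. lra.
Qed.

Lemma is_series_gamma x : 0 < x -> is_series (gamma_series_term x) (gamma_series_sum x).
Proof.
intros Hx. change (is_lim_seq (sum_n (gamma_series_term x)) (gamma_series_sum x)).
apply (is_lim_seq_ext (fun N =>
   (INR (S N) + (x - / 2)) * (euler_seq (S N) - euler_gamma) + (x - / 2) * euler_gamma
   + ln_gamma_approx x (S N) - stirling_seq (S N) + (ln (INR (S N) + x) - ln (INR (S N))))).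
{ intros N. rewrite sum_n_Reals, sum_f_R0_gamma_series_term.
  unfold euler_seq, ln_gamma_approx, stirling_seq. cbn [sum_lt].
  replace (x + INR (S N)) with (INR (S N) + x) by ring. field. }
apply -> (is_lim_seq_incr_1 (fun M =>
   (INR M + (x - / 2)) * (euler_seq M - euler_gamma) + (x - / 2) * euler_gamma
   + ln_gamma_approx x M - stirling_seq M + (ln (INR M + x) - ln (INR M)))).
replace (gamma_series_sum x)
  with (/ 2 + (x - / 2) * euler_gamma + ln (Gamma x) - ln (2 * PI) / 2 + 0)
  by (unfold gamma_series_sum; field).
apply is_lim_seq_plus'; [|apply is_lim_seq_ln_plus_sub_ln; lra].
apply is_lim_seq_minus'; [|apply stirling_seq_lim].
apply is_lim_seq_plus'; [|now apply ln_gamma_approx_lim].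
apply is_lim_seq_plus'; [apply euler_seq_sub_gamma_rate | apply is_lim_seq_const].
Qed.

Lemma is_series_sum_lt (f : nat -> nat -> R) (l : nat -> R) k :
  (forall j, (j < k)%nat -> is_series (f j) (l j)) ->
  is_series (fun n => sum_lt (fun j => f j n) k) (sum_lt l k).
Proof.
induction k as [|k IHk]; intros Hf.
- change (is_lim_seq (sum_n (fun _ => 0)) 0).
  apply (is_lim_seq_ext (fun _ => 0));
    [intros N; rewrite sum_n_const; ring | apply is_lim_seq_const].
- apply (is_series_plus (fun n => sum_lt (fun j => f j n) k) (f k)).
  + apply IHk. intros j Hj. apply Hf. lia.
  + apply Hf. lia.
Qed.

Lemma sum_lt_gamma_series_term k n :
  sum_lt (fun j => gamma_series_term (INR j + 1) n) k
  = INR k * (harmonic (S n) - euler_gamma) - sum_lt (fun j => ln (INR (S n) + INR j)) k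
    + (INR k * (INR k + 1) / 2 - 3 / 2 * INR k) / INR (S n).
Proof.
assert (0 < INR (S n)) by (apply lt_0_INR; lia).
induction k as [|k IHk]; [change (INR 0) with 0; cbn [sum_lt]; field; lra|].
cbn [sum_lt]. rewrite IHk. unfold gamma_series_term.
replace (INR (S n) + (INR k + 1) - 1) with (INR (S n) + INR k) by ring.
rewrite (S_INR k). field. lra.
Qed.

Lemma sum_lt_gamma_series_sum k :
  sum_lt (fun j => gamma_series_sum (INR j + 1)) k
  = euler_gamma * (INR k * (INR k + 1) / 2) + ln (BarnesG (INR k + 1))
    + INR k * (1 - euler_gamma - ln (2 * PI)) / 2.
Proof.
rewrite ln_BarnesG_nat.
induction k as [|k IHk]; [simpl; field|].
cbn [sum_lt]. rewrite IHk. unfold gamma_series_sum. rewrite ln_Gamma_nat, S_INR. field.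
Qed.

Theorem mainTheorem13 :
  (forall k : nat, (1 <= k)%nat ->
     is_series
       (fun n : nat =>
          let m := S n in
          harmonic m - ln (rising (INR m) k) / INR k - euler_gamma
          + (INR k - 2) / (2 * INR m))
       ((euler_gamma * INR k + 1 - ln (2 * PI)) / 2
        + ln (BarnesG (INR k + 1)) / INR k))
  /\
  (forall x : R, 0 < x ->
     is_series
       (fun n : nat =>
          let m := S n in
          harmonic m - ln (INR m + x - 1) - euler_gamma
          + x / INR m - 3 / (2 * INR m))
       (euler_gamma * x + ln (Gamma x) + (1 - euler_gamma - ln (2 * PI)) / 2)).
Proof.
split; [|exact is_series_gamma].
intros k Hk. assert (0 < INR k) by (apply lt_0_INR; lia).
assert (Hterm : forall n : nat,
  / INR k * sum_lt (fun j => gamma_series_term (INR j + 1) n) k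
  = harmonic (S n) - ln (rising (INR (S n)) k) / INR k - euler_gamma
    + (INR k - 2) / (2 * INR (S n))).
{ intros n. assert (0 < INR (S n)) by (apply lt_0_INR; lia).
  rewrite sum_lt_gamma_series_term, ln_rising by lra. field. lra. }
assert (Hvalue : / INR k * sum_lt (fun j => gamma_series_sum (INR j + 1)) k
                 = (euler_gamma * INR k + 1 - ln (2 * PI)) / 2 + ln (BarnesG (INR k + 1)) / INR k).
{ rewrite sum_lt_gamma_series_sum. field. lra. }
rewrite <- Hvalue. apply (is_series_ext _ _ _ Hterm).
apply (@is_series_scal R_AbsRing R_NormedModule (/ INR k)
         (fun n => sum_lt (fun j => gamma_series_term (INR j + 1) n) k)).
apply is_series_sum_lt. intros j _. apply is_series_gamma. pose proof (pos_INR j). lra.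
Qed.
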